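(* There exist $\bar\tau\in(\tfrac12,1)$ and $\bar\rho,\bar R,\bar\phi,\bar\epsilon>0$ such that the following holds. Let $p,q\in\mathbb{H}^n\setminus\{0\}$, $t,\tilde t\ge1$, $R>1$, $T\ge t\tilde t$, $\epsilon\in(0,1)$, and $r\ge\tilde r\ge TR$ with $\tilde r\le\epsilon r$; suppose $q\in\partial_tB_r(p)$ and $0\in\partial_tB_r(p)\cap\partial_{\tilde t}B_{\tilde r}(q)$. Let $I(p)=\{i:\rho_i(p)<10T/r\}$. If $R>\bar R$, $\epsilon<\bar\epsilon$, $|\tau_p|\ge\bar\tau$ and $\max_{1\le i\le n}\phi_i(p,q)<\bar\phi$, then either there exists $i\notin I(p)$ with $\rho_i(q)<10T/\tilde r$, or $d(\hat p,\hat q)>\bar\rho$.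
   Context: $\mathbb{H}^n=\mathbb{C}^n\times\mathbb{R}$ with product $(z,\tau)(w,\sigma)=(z+w,\tau+\sigma+\tfrac12\operatorname{Im}\langle z,w\rangle)$, $\langle z,w\rangle=\sum_j\overline{z_j}w_j$, identity $0$; dilations $\delta_\lambda(z,\tau)=(\lambda z,\lambda^2\tau)$; $d(p,q)=\inf\{r>0:\delta_{1/r}(pq^{-1})\in B_{eucl}\}$ ($B_{eucl}$ the closed Euclidean unit ball in $\mathbb{R}^{2n+1}$). $B_r(p)=\{y:d(y,p)\le r\}$, $\partial B_r(p)=\{y:d(y,p)=r\}$, $\partial_tB_r(p)=\{y:d(y,\partial B_r(p))\le t\}$. For $p\ne0$ let $\hat p=\delta_{1/d(p,0)}p=(z_p,\tau_p)$, so $\|z_p\|^2+\tau_p^2=1$; write $(z_p)_j=\rho_j(p)e^{i\phi_j(p)}$ with $\rho_j(p)\ge0$, $\phi_j(p)\in(-\pi,\pi]$. For $p,q\ne0$, $\phi_j(p,q)\in[0,\pi]$ is the magnitude of the angle between $e^{i\phi_j(p)}$ and $e^{i\phi_j(q)}$. *)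

From Stdlib Require Import Reals Lra Lia ClassicalEpsilon.
Open Scope R_scope.

(* A point of H^n = C^n x R.  Coordinate j (0 <= j < n) of z is
   hx p j + i * hy p j; values at indices >= n are irrelevant
   (all notions below only read indices < n). *)
Record Hpt := mkH { hx : nat -> R; hy : nat -> R; ht : R }.

Fixpoint fsum (f : nat -> R) (k : nat) : R :=
  match k with O => 0 | S k' => fsum f k' + f k' end.

Definition H0 : Hpt := mkH (fun _ => 0) (fun _ => 0) 0.

Definition Hnonzero (n : nat) (p : Hpt) : Prop :=
  ht p <> 0 \/ exists j, (j < n)%nat /\ (hx p j <> 0 \/ hy p j <> 0).

(* Im <z,w> with <z,w> = sum_j conj(z_j) w_j *)
Definition imherm (n : nat) (p q : Hpt) : R :=
  fsum (fun j => hx p j * hy q j - hy p j * hx q j) n.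

(* group law (z,t)(w,s) = (z+w, t+s+1/2 Im<z,w>) *)
Definition Hmul (n : nat) (p q : Hpt) : Hpt :=
  mkH (fun j => hx p j + hx q j) (fun j => hy p j + hy q j)
      (ht p + ht q + / 2 * imherm n p q).

Definition Hinv (p : Hpt) : Hpt :=
  mkH (fun j => - hx p j) (fun j => - hy p j) (- ht p).

Definition Hdil (l : R) (p : Hpt) : Hpt :=
  mkH (fun j => l * hx p j) (fun j => l * hy p j) (l ^ 2 * ht p).

Definition znorm2 (n : nat) (p : Hpt) : R :=
  fsum (fun j => hx p j ^ 2 + hy p j ^ 2) n.

Definition in_eucl_ball (n : nat) (p : Hpt) : Prop :=
  znorm2 n p + ht p ^ 2 <= 1.

Definition is_glb (E : R -> Prop) (m : R) : Prop :=
  (forall x, E x -> m <= x) /\ (forall b, (forall x, E x -> b <= x) -> b <= m).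

Definition Rinf (E : R -> Prop) : R :=
  epsilon (inhabits 0) (fun m => is_glb E m).

Definition Hdist (n : nat) (p q : Hpt) : R :=
  Rinf (fun r => r > 0 /\ in_eucl_ball n (Hdil (/ r) (Hmul n p (Hinv q)))).

Definition Hdist_set (n : nat) (y : Hpt) (S : Hpt -> Prop) : R :=
  Rinf (fun a => exists s, S s /\ a = Hdist n y s).

Definition Hball (n : nat) (r : R) (p : Hpt) : Hpt -> Prop :=
  fun y => Hdist n y p <= r.
Definition Hsphere (n : nat) (r : R) (p : Hpt) : Hpt -> Prop :=
  fun y => Hdist n y p = r.
Definition Hshell (n : nat) (t r : R) (p : Hpt) : Hpt -> Prop :=
  fun y => Hdist_set n y (Hsphere n r p) <= t.

Definition Hhat (n : nat) (p : Hpt) : Hpt := Hdil (/ Hdist n p H0) p.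

Definition rho (n : nat) (j : nat) (p : Hpt) : R :=
  sqrt (hx (Hhat n p) j ^ 2 + hy (Hhat n p) j ^ 2).

(* phi_j(p) in (-pi, pi] with (z_{p-hat})_j = rho_j(p) e^{i phi_j(p)}
   (arbitrary in (-pi,pi] if rho_j(p) = 0) *)
Definition phi (n : nat) (j : nat) (p : Hpt) : R :=
  epsilon (inhabits 0) (fun th => - PI < th <= PI /\
     hx (Hhat n p) j = rho n j p * cos th /\ hy (Hhat n p) j = rho n j p * sin th).

(* phi_j(p,q) in [0,pi]: magnitude of the angle between e^{i phi_j(p)}
   and e^{i phi_j(q)} *)
Definition phi2 (n : nat) (j : nat) (p q : Hpt) : R :=
  acos (cos (phi n j p - phi n j q)).

From Stdlib Require Import Reals Lra Psatz ClassicalEpsilon Classical.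
Open Scope R_scope.

(* The distance is [d(x,y) = N(x y^-1)] for the gauge [N(z,tau)] with
   [N^4 = |z|^2 N^2 + tau^2], which satisfies the quasi-triangle inequality
   [N(g x) <= N(x) + 3 N(g)]; hence [a = d(p,0)] and [b = d(q,0)] are close to [r] and
   [r~ << r].  Suppose [d(p^,q^) <= 1/10] and that no [i] outside [I(p)] has [rho_i(q)]
   small.  Then [q^] is nearly vertical, with height of the same sign [e] as [p^].
   Pick [s], [s0] on the sphere [d(., p) = r] near [q] and near [0].  Subtracting the
   sphere equations of [s p^-1] and [s0 p^-1] gives
     [X L + sum_j B_j = r^2 (|z_s|^2 - |z_s0|^2)]
   with [X ~ 2 e tau_p ~ 2 a^2], [L = e (tau_s - tau_s0) ~ b^2], and [B_j] the [j]-th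
   coordinate terms of [z_p] against [z_s - z_s0].  Where [rho_j(p)] is small, [B_j] is
   [O(T a^2 b)]; elsewhere [rho_j(q)] is not small, [z_s - z_s0] is [z_q] up to [O(t)],
   and the angle condition makes [B_j >= 0].  For [R] large the left side is thus about
   [a^2 b^2], while the right side is at most [r^2 (b/4 + O(t))^2]: a contradiction. *)

Lemma fsum_ext f g k : (forall j, (j < k)%nat -> f j = g j) -> fsum f k = fsum g k.
Proof.
  induction k as [|k IH]; intros Hfg; simpl; [reflexivity|].
  rewrite IH by (intros; apply Hfg; lia). rewrite Hfg by lia. reflexivity.
Qed.

Lemma fsum_plus f g k : fsum (fun j => f j + g j) k = fsum f k + fsum g k.
Proof. induction k as [|k IH]; simpl; [lra|]. rewrite IH; ring. Qed.

Lemma fsum_minus f g k : fsum (fun j => f j - g j) k = fsum f k - fsum g k.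
Proof. induction k as [|k IH]; simpl; [lra|]. rewrite IH; ring. Qed.

Lemma fsum_scal c f k : fsum (fun j => c * f j) k = c * fsum f k.
Proof. induction k as [|k IH]; simpl; [lra|]. rewrite IH; ring. Qed.

Lemma fsum_opp f k : fsum (fun j => - f j) k = - fsum f k.
Proof. induction k as [|k IH]; simpl; [lra|]. rewrite IH; ring. Qed.

Lemma fsum_eq0 f k : (forall j, (j < k)%nat -> f j = 0) -> fsum f k = 0.
Proof.
  induction k as [|k IH]; intros Hf; simpl; [reflexivity|].
  rewrite IH by (intros; apply Hf; lia). rewrite Hf by lia. ring.
Qed.

Lemma fsum_ge_const f c k : (forall j, (j < k)%nat -> c <= f j) -> INR k * c <= fsum f k.
Proof.
  induction k as [|k IH]; intros Hf; cbn [fsum]; [simpl; lra|].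
  rewrite S_INR. specialize (IH ltac:(intros; apply Hf; lia)). specialize (Hf k ltac:(lia)). lra.
Qed.

Lemma fsum_nonneg f k : (forall j, (j < k)%nat -> 0 <= f j) -> 0 <= fsum f k.
Proof. intros Hf. rewrite <- (Rmult_0_r (INR k)). now apply fsum_ge_const. Qed.

Lemma fsum_term_le f k j : (forall i, (i < k)%nat -> 0 <= f i) -> (j < k)%nat -> f j <= fsum f k.
Proof.
  induction k as [|k IH]; intros Hf Hj; simpl; [lia|].
  assert (Hk : 0 <= fsum f k) by (apply fsum_nonneg; intros; apply Hf; lia).
  pose proof (Hf k ltac:(lia)).
  destruct (Nat.eq_dec j k) as [->|Hjk]; [lra|].
  specialize (IH ltac:(intros; apply Hf; lia) ltac:(lia)). lra.
Qed.

Lemma fsum_Cauchy_Schwarz (a b c d : nat -> R) k :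
  (fsum (fun j => a j * c j + b j * d j) k) ^ 2 <=
  fsum (fun j => a j ^ 2 + b j ^ 2) k * fsum (fun j => c j ^ 2 + d j ^ 2) k.
Proof.
  set (P := fsum (fun j => a j * c j + b j * d j) k).
  set (A := fsum (fun j => a j ^ 2 + b j ^ 2) k).
  set (C := fsum (fun j => c j ^ 2 + d j ^ 2) k).
  assert (Hquad : forall l, 0 <= A - 2 * l * P + l ^ 2 * C).
  { intros l.
    replace (A - 2 * l * P + l ^ 2 * C)
      with (fsum (fun j => (a j - l * c j) ^ 2 + (b j - l * d j) ^ 2) k).
    - apply fsum_nonneg; intros j _.
      pose proof (pow2_ge_0 (a j - l * c j)); pose proof (pow2_ge_0 (b j - l * d j)); lra.
    - unfold A, P, C.
      rewrite <- (fsum_scal (l ^ 2)), <- (fsum_scal (2 * l)), <- fsum_minus, <- fsum_plus.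
      apply fsum_ext; intros; ring. }
  assert (HA : 0 <= A) by (apply fsum_nonneg; intros; nra).
  assert (HC : 0 <= C) by (apply fsum_nonneg; intros; nra).
  destruct (Req_dec C 0) as [C0|C0].
  - (* a nonzero [P] would make the quadratic polynomial in [l] linear and unbounded below *)
    destruct (Req_dec P 0) as [S0|S0]; [rewrite S0, C0; lra|].
    specialize (Hquad ((A + 1) / (2 * P))). rewrite C0 in Hquad.
    replace (A - 2 * ((A + 1) / (2 * P)) * P + ((A + 1) / (2 * P)) ^ 2 * 0) with (-1)
      in Hquad by (field; auto). lra.
  - specialize (Hquad (P / C)).
    replace (A - 2 * (P / C) * P + (P / C) ^ 2 * C) with ((A * C - P ^ 2) / C) in Hquad
      by (field; auto).
    assert (0 <= A * C - P ^ 2); [|lra].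
    replace (A * C - P ^ 2) with (C * ((A * C - P ^ 2) / C)) by (field; auto). nra.
Qed.

Lemma Rabs_le_of_sqr a b : 0 <= b -> a ^ 2 <= b ^ 2 -> Rabs a <= b.
Proof.
  intros Hb H. rewrite <- (Rabs_pos_eq b Hb). apply Rsqr_le_abs_0. rewrite !Rsqr_pow2. lra.
Qed.

Lemma sqrt_le_of_sqr x c : 0 <= c -> x <= c ^ 2 -> sqrt x <= c.
Proof. intros Hc H. rewrite <- (sqrt_pow2 c Hc). now apply sqrt_le_1_alt. Qed.

Lemma sqrt_sqr x : 0 <= x -> sqrt x ^ 2 = x.
Proof. intros Hx. rewrite <- Rsqr_pow2. now apply Rsqr_sqrt. Qed.

Definition zdot (n : nat) (x y : Hpt) : R :=
  fsum (fun j => hx x j * hx y j + hy x j * hy y j) n.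

Definition znorm (n : nat) (x : Hpt) : R := sqrt (znorm2 n x).

Lemma znorm2_nonneg n x : 0 <= znorm2 n x.
Proof. apply fsum_nonneg; intros; nra. Qed.

Lemma znorm_nonneg n x : 0 <= znorm n x.
Proof. apply sqrt_pos. Qed.

Lemma znorm_sqr n x : znorm n x ^ 2 = znorm2 n x.
Proof. apply sqrt_sqr, znorm2_nonneg. Qed.

Lemma znorm_le n x c : 0 <= c -> znorm2 n x <= c ^ 2 -> znorm n x <= c.
Proof. apply sqrt_le_of_sqr. Qed.

Lemma zdot_abs_le n x y : Rabs (zdot n x y) <= znorm n x * znorm n y.
Proof.
  apply Rabs_le_of_sqr; [apply Rmult_le_pos; apply znorm_nonneg|].
  rewrite Rpow_mult_distr, !znorm_sqr. apply fsum_Cauchy_Schwarz.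
Qed.

Lemma imherm_abs_le n x y : Rabs (imherm n x y) <= znorm n x * znorm n y.
Proof.
  apply Rabs_le_of_sqr; [apply Rmult_le_pos; apply znorm_nonneg|].
  rewrite Rpow_mult_distr, !znorm_sqr. unfold imherm, znorm2.
  rewrite (fsum_ext _ (fun j => hx x j * hy y j + hy x j * (- hx y j)))
    by (intros; ring).
  rewrite (fsum_ext (fun j => hx y j ^ 2 + hy y j ^ 2) (fun j => hy y j ^ 2 + (- hx y j) ^ 2))
    by (intros; ring).
  apply fsum_Cauchy_Schwarz.
Qed.

Lemma znorm2_ext n x y :
  (forall j, (j < n)%nat -> hx x j ^ 2 + hy x j ^ 2 = hx y j ^ 2 + hy y j ^ 2) ->
  znorm2 n x = znorm2 n y.
Proof. apply fsum_ext. Qed.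

Lemma znorm2_dil n l x : znorm2 n (Hdil l x) = l ^ 2 * znorm2 n x.
Proof. unfold znorm2; simpl. rewrite <- fsum_scal. apply fsum_ext; intros; ring. Qed.

Lemma znorm2_mul_inv n x y :
  znorm2 n (Hmul n x (Hinv y)) = znorm2 n x - 2 * zdot n x y + znorm2 n y.
Proof.
  unfold znorm2, zdot; simpl. rewrite <- fsum_scal, <- fsum_minus, <- fsum_plus.
  apply fsum_ext; intros; ring.
Qed.

Lemma znorm_sub_le n w x y :
  (forall j, (j < n)%nat -> hx w j = hx x j - hx y j /\ hy w j = hy x j - hy y j) ->
  znorm n w <= znorm n x + znorm n y.
Proof.
  intros Hw. apply znorm_le; [pose proof (znorm_nonneg n x); pose proof (znorm_nonneg n y); lra|].
  assert (E : znorm2 n w = znorm2 n (Hmul n x (Hinv y))).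
  { apply znorm2_ext; intros j Hj; destruct (Hw j Hj) as [-> ->]; simpl; ring. }
  rewrite E, znorm2_mul_inv, <- (znorm_sqr n x), <- (znorm_sqr n y).
  pose proof (Rle_abs (- zdot n x y)). rewrite Rabs_Ropp in *.
  pose proof (zdot_abs_le n x y). nra.
Qed.

Lemma coord_le_znorm n x j : (j < n)%nat -> sqrt (hx x j ^ 2 + hy x j ^ 2) <= znorm n x.
Proof.
  intros Hj. apply sqrt_le_1_alt.
  apply (fsum_term_le (fun j => hx x j ^ 2 + hy x j ^ 2)); auto; intros; nra.
Qed.

Lemma znorm_inv n x : znorm n (Hinv x) = znorm n x.
Proof. unfold znorm. f_equal. apply znorm2_ext; intros; simpl; ring. Qed.

(** * The homogeneous norm *)

(* [gauge Z t] is the nonnegative root [N] of [N^4 = Z N^2 + t^2], and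
   [hnorm n x = d(x, 0)] (see [Hdist_eq]). *)
Definition gauge (Z t : R) : R := sqrt (Z / 2 + sqrt (Z ^ 2 / 4 + t ^ 2)).

Definition hnorm (n : nat) (x : Hpt) : R := gauge (znorm2 n x) (ht x).

Lemma gauge_spec Z t : 0 <= Z ->
  0 <= gauge Z t /\ gauge Z t ^ 4 = Z * gauge Z t ^ 2 + t ^ 2 /\
  Z <= gauge Z t ^ 2 /\ Rabs t <= gauge Z t ^ 2.
Proof.
  intros HZ. set (s := sqrt (Z ^ 2 / 4 + t ^ 2)).
  assert (Hs2 : s ^ 2 = Z ^ 2 / 4 + t ^ 2) by (apply sqrt_sqr; nra).
  assert (Hs : 0 <= s) by apply sqrt_pos.
  assert (HsZ : Z / 2 <= s) by (apply Rsqr_incr_0_var; rewrite ?Rsqr_pow2; nra).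
  assert (Hst : Rabs t <= s) by (apply Rabs_le_of_sqr; nra).
  assert (HN2 : gauge Z t ^ 2 = Z / 2 + s) by (apply sqrt_sqr; lra).
  repeat split; [apply sqrt_pos| |lra|lra].
  replace (gauge Z t ^ 4) with ((gauge Z t ^ 2) ^ 2) by ring. rewrite HN2. nra.
Qed.

Lemma gauge_le Z t m : 0 <= Z -> 0 <= m -> Z <= 2 * m ^ 2 -> Z * m ^ 2 + t ^ 2 <= m ^ 4 ->
  gauge Z t <= m.
Proof.
  intros HZ Hm HZm H. apply sqrt_le_of_sqr; [lra|].
  assert (sqrt (Z ^ 2 / 4 + t ^ 2) <= m ^ 2 - Z / 2); [|lra].
  apply sqrt_le_of_sqr; nra.
Qed.

Lemma gauge_le_inv Z t m : 0 <= Z -> gauge Z t <= m -> Z * m ^ 2 + t ^ 2 <= m ^ 4.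
Proof.
  intros HZ H. destruct (gauge_spec Z t HZ) as (HN0 & HN & HZN & _).
  set (N := gauge Z t) in *.
  assert (HNm : N ^ 2 <= m ^ 2) by nra.
  assert (E : m ^ 4 - (Z * m ^ 2 + t ^ 2) = (m ^ 2 - N ^ 2) * (m ^ 2 + N ^ 2 - Z)) by nra.
  nra.
Qed.

Lemma gauge_ext Z t t' : t ^ 2 = t' ^ 2 -> gauge Z t = gauge Z t'.
Proof. intros E. unfold gauge. now rewrite E. Qed.

Lemma gauge_vertical r : 0 <= r -> gauge 0 (r ^ 2) = r.
Proof.
  intros Hr. unfold gauge.
  replace (0 ^ 2 / 4 + (r ^ 2) ^ 2) with ((r ^ 2) ^ 2) by field.
  rewrite sqrt_pow2 by nra. replace (0 / 2 + r ^ 2) with (r ^ 2) by field.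
  now apply sqrt_pow2.
Qed.

Lemma gauge_scale l Z t : 0 < l -> 0 <= Z -> gauge (l ^ 2 * Z) (l ^ 2 * t) = l * gauge Z t.
Proof.
  intros Hl HZ. unfold gauge.
  replace ((l ^ 2 * Z) ^ 2 / 4 + (l ^ 2 * t) ^ 2) with ((l ^ 2) ^ 2 * (Z ^ 2 / 4 + t ^ 2))
    by field.
  rewrite sqrt_mult, sqrt_pow2 by nra.
  replace (l ^ 2 * Z / 2 + l ^ 2 * sqrt (Z ^ 2 / 4 + t ^ 2))
    with (l ^ 2 * (Z / 2 + sqrt (Z ^ 2 / 4 + t ^ 2))) by field.
  rewrite sqrt_mult, sqrt_pow2 by (pose proof (sqrt_pos (Z ^ 2 / 4 + t ^ 2)); nra).
  reflexivity.
Qed.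

Lemma hnorm_spec n x :
  0 <= hnorm n x /\ hnorm n x ^ 4 = znorm2 n x * hnorm n x ^ 2 + ht x ^ 2 /\
  znorm n x <= hnorm n x /\ Rabs (ht x) <= hnorm n x ^ 2.
Proof.
  destruct (gauge_spec (znorm2 n x) (ht x) (znorm2_nonneg n x)) as (H0 & H1 & H2 & H3).
  repeat split; auto. apply znorm_le; auto.
Qed.

Lemma hnorm_ext n x y :
  (forall j, (j < n)%nat -> hx x j ^ 2 + hy x j ^ 2 = hx y j ^ 2 + hy y j ^ 2) ->
  ht x ^ 2 = ht y ^ 2 -> hnorm n x = hnorm n y.
Proof.
  intros Hz Ht. unfold hnorm. rewrite (znorm2_ext n x y Hz). now apply gauge_ext.
Qed.

Lemma hnorm_dil n l x : 0 < l -> hnorm n (Hdil l x) = l * hnorm n x.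
Proof.
  intros Hl. unfold hnorm. rewrite znorm2_dil. apply gauge_scale; auto using znorm2_nonneg.
Qed.

Lemma hnorm_pos n p : Hnonzero n p -> 0 < hnorm n p.
Proof.
  intros Hp. destruct (hnorm_spec n p) as (H0 & H4 & _).
  destruct H0 as [|H0]; auto. exfalso. rewrite <- H0 in H4.
  assert (Ht : ht p = 0) by nra.
  destruct Hp as [Hp|(j & Hj & Hp)]; [auto|].
  assert (Hz : znorm2 n p = 0).
  { destruct (gauge_spec (znorm2 n p) (ht p) (znorm2_nonneg n p)) as (_ & _ & HZ & _).
    fold (hnorm n p) in HZ. rewrite <- H0 in HZ. pose proof (znorm2_nonneg n p). nra. }
  assert (hx p j ^ 2 + hy p j ^ 2 <= 0).
  { rewrite <- Hz. apply (fsum_term_le (fun j => hx p j ^ 2 + hy p j ^ 2)); auto; intros; nra. }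
  destruct Hp as [Hp|Hp]; apply Hp; nra.
Qed.

(* With [Zs = |z_x|], [T = |t_x|], [N = N(x)] and [h = N(g)], this says that
   [N(x) + 3 N(g)] is admissible in [gauge_le] for the product [g x]. *)
Lemma hnorm_mul_arith (Zs T N h : R) :
  0 <= Zs -> Zs <= N -> 0 <= h -> 0 <= T -> T <= N ^ 2 -> T ^ 2 = N ^ 4 - Zs ^ 2 * N ^ 2 ->
  (h + Zs) ^ 2 * (N + 3 * h) ^ 2 + (T + (h ^ 2 + h * Zs / 2)) ^ 2 <= (N + 3 * h) ^ 4.
Proof.
  intros HZs HZN Hh HT HTN HT2. set (k := h ^ 2 + h * Zs / 2). set (m := N + 3 * h).
  assert (HN : 0 <= N) by lra.
  assert (Hk0 : 0 <= k) by (unfold k; nra).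
  assert (Hk : (T + k) ^ 2 <= N ^ 4 - Zs ^ 2 * N ^ 2 + 2 * N ^ 2 * k + k ^ 2) by nra.
  assert (HkN : k <= h ^ 2 + h * N / 2) by (unfold k; nra).
  assert (G1 : (h + Zs) ^ 2 * m ^ 2 - Zs ^ 2 * N ^ 2 <= (h + N) ^ 2 * m ^ 2 - N ^ 2 * N ^ 2).
  { assert (m ^ 2 - N ^ 2 >= 0) by (unfold m; nra).
    replace ((h + Zs) ^ 2 * m ^ 2 - Zs ^ 2 * N ^ 2)
      with (Zs ^ 2 * (m ^ 2 - N ^ 2) + (2 * h * Zs + h ^ 2) * m ^ 2) by ring.
    replace ((h + N) ^ 2 * m ^ 2 - N ^ 2 * N ^ 2)
      with (N ^ 2 * (m ^ 2 - N ^ 2) + (2 * h * N + h ^ 2) * m ^ 2) by ring.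
    assert (Zs ^ 2 <= N ^ 2) by nra. assert (2 * h * Zs <= 2 * h * N) by nra. nra. }
  assert (G2 : (h + N) ^ 2 * m ^ 2 - N ^ 2 * N ^ 2 + N ^ 4 + 2 * N ^ 2 * (h ^ 2 + h * N / 2)
               + (h ^ 2 + h * N / 2) ^ 2 <= m ^ 4).
  { unfold m.
    assert (E : (N + 3 * h) ^ 4 - ((h + N) ^ 2 * (N + 3 * h) ^ 2 - N ^ 2 * N ^ 2 + N ^ 4
              + 2 * N ^ 2 * (h ^ 2 + h * N / 2) + (h ^ 2 + h * N / 2) ^ 2)
              = 3 * h * N ^ 3 + (32 - 2 - 1 / 4) * h ^ 2 * N ^ 2 + 83 * h ^ 3 * N + 71 * h ^ 4)
      by field.
    assert (0 <= h * N ^ 3) by (apply Rmult_le_pos; [lra|apply pow_le; lra]).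
    assert (0 <= h ^ 2 * N ^ 2) by (apply Rmult_le_pos; apply pow_le; lra).
    assert (0 <= h ^ 3 * N) by (apply Rmult_le_pos; [apply pow_le|]; lra).
    assert (0 <= h ^ 4) by (apply pow_le; lra).
    lra. }
  assert (2 * N ^ 2 * k + k ^ 2 <= 2 * N ^ 2 * (h ^ 2 + h * N / 2) + (h ^ 2 + h * N / 2) ^ 2)
    by nra.
  nra.
Qed.

Lemma hnorm_mul_le n g x : hnorm n (Hmul n g x) <= hnorm n x + 3 * hnorm n g.
Proof.
  destruct (hnorm_spec n x) as (Nx0 & NxE & Nxz & Nxt).
  destruct (hnorm_spec n g) as (Ng0 & _ & Ngz & Ngt).
  assert (HZ : znorm n (Hmul n g x) <= znorm n g + znorm n x).
  { rewrite <- (znorm_inv n x). apply znorm_sub_le; intros; simpl; split; ring. }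
  pose proof (imherm_abs_le n g x) as Him.
  pose proof (znorm_nonneg n g). pose proof (znorm_nonneg n x) as Zs0.
  pose proof (znorm_nonneg n (Hmul n g x)).
  rewrite <- (znorm_sqr n x) in NxE.
  set (N := hnorm n x) in *. set (h := hnorm n g) in *. set (Zs := znorm n x) in *.
  assert (HZ2 : znorm2 n (Hmul n g x) <= (h + Zs) ^ 2) by (rewrite <- znorm_sqr; nra).
  assert (Him' : Rabs (imherm n g x) <= h * Zs) by nra.
  set (T := Rabs (ht x)) in *.
  assert (HT : Rabs (ht (Hmul n g x)) <= T + (h ^ 2 + h * Zs / 2)).
  { change (ht (Hmul n g x)) with (ht g + ht x + / 2 * imherm n g x).
    pose proof (Rabs_triang (ht g + ht x) (/ 2 * imherm n g x)).
    pose proof (Rabs_triang (ht g) (ht x)).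
    rewrite Rabs_mult, (Rabs_right (/ 2)) in * by lra. unfold T. lra. }
  assert (HT2 : T ^ 2 = N ^ 4 - Zs ^ 2 * N ^ 2) by (unfold T; rewrite pow2_abs; lra).
  assert (0 <= T) by apply Rabs_pos.
  pose proof (hnorm_mul_arith Zs T N h Zs0 Nxz Ng0 ltac:(lra) Nxt HT2).
  apply gauge_le; [apply znorm2_nonneg|lra|nra|].
  assert (ht (Hmul n g x) ^ 2 <= (T + (h ^ 2 + h * Zs / 2)) ^ 2).
  { rewrite <- pow2_abs. pose proof (Rabs_pos (ht (Hmul n g x))). nra. }
  pose proof (pow2_ge_0 (N + 3 * h)). nra.
Qed.

(** * The distance *)

Lemma is_glb_unique E m m' : is_glb E m -> is_glb E m' -> m = m'.
Proof. intros [A B] [C D]. apply Rle_antisym; [apply D|apply B]; auto. Qed.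

Lemma Rinf_eq E m : is_glb E m -> Rinf E = m.
Proof.
  intros H. apply (is_glb_unique E); auto. unfold Rinf. apply epsilon_spec. now exists m.
Qed.

Lemma is_glb_exists E : (exists x, E x) -> (forall x, E x -> 0 <= x) -> exists m, is_glb E m.
Proof.
  intros [x0 Hx0] Hlb.
  destruct (completeness (fun y => E (- y))) as [m [Hm1 Hm2]].
  - exists 0. intros y Hy. specialize (Hlb _ Hy). lra.
  - exists (- x0). now rewrite Ropp_involutive.
  - exists (- m). split.
    + intros x Hx. assert (- x <= m) by (apply Hm1; now rewrite Ropp_involutive). lra.
    + intros b Hb. assert (m <= - b); [|lra].
      apply Hm2. intros y Hy. specialize (Hb _ Hy). lra.
Qed.

Lemma in_eucl_ball_iff n x : in_eucl_ball n x <-> hnorm n x <= 1.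
Proof.
  unfold in_eucl_ball. pose proof (znorm2_nonneg n x). split; intros Hx.
  - apply gauge_le; nra.
  - apply gauge_le_inv in Hx; auto. lra.
Qed.

Lemma Hdist_eq n p q : Hdist n p q = hnorm n (Hmul n p (Hinv q)).
Proof.
  unfold Hdist. apply Rinf_eq. set (x := Hmul n p (Hinv q)).
  assert (Hball : forall r, r > 0 -> in_eucl_ball n (Hdil (/ r) x) <-> hnorm n x <= r).
  { intros r Hr. rewrite in_eucl_ball_iff, hnorm_dil by (apply Rinv_0_lt_compat; lra).
    split; intros Hx.
    - apply (Rmult_le_compat_l r) in Hx; [|lra]. rewrite <- Rmult_assoc, Rinv_r in Hx; lra.
    - apply (Rmult_le_compat_l (/ r)) in Hx; [|left; apply Rinv_0_lt_compat; lra].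
      rewrite Rinv_l in Hx; lra. }
  destruct (hnorm_spec n x) as (HN0 & _).
  split.
  - intros r [Hr Hb]. now apply Hball.
  - intros b Hb. destruct (Rle_dec b (hnorm n x)) as [|Hlt]; auto. exfalso.
    assert (b <= (hnorm n x + b) / 2) by (apply Hb; split; [|apply Hball]; lra). lra.
Qed.

Lemma imherm_inv_r n x y : imherm n x (Hinv y) = - imherm n x y.
Proof.
  unfold imherm; simpl. rewrite <- fsum_opp. apply fsum_ext; intros; ring.
Qed.

Lemma Hdist_sym n x y : Hdist n x y = Hdist n y x.
Proof.
  rewrite !Hdist_eq. apply hnorm_ext; [intros; simpl; ring|].
  simpl. rewrite !imherm_inv_r.
  replace (imherm n y x) with (- imherm n x y); [ring|].
  unfold imherm. rewrite <- fsum_opp. apply fsum_ext; intros; ring.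
Qed.

Lemma Hdist_quasi_triangle n x y z : Hdist n x z <= Hdist n y z + 3 * Hdist n x y.
Proof.
  rewrite !Hdist_eq.
  replace (hnorm n (Hmul n x (Hinv z)))
    with (hnorm n (Hmul n (Hmul n x (Hinv y)) (Hmul n y (Hinv z)))) by
    (apply hnorm_ext; [intros; simpl; ring|]; f_equal; simpl; rewrite !imherm_inv_r;
     replace (imherm n (Hmul n x (Hinv y)) (Hmul n y (Hinv z)))
       with (imherm n x y - imherm n x z + imherm n y z) by
       (unfold imherm; rewrite <- fsum_minus, <- fsum_plus; apply fsum_ext; intros; simpl; ring);
     ring).
  apply hnorm_mul_le.
Qed.

Lemma Hdist_0_r n p : Hdist n p H0 = hnorm n p.
Proof.
  rewrite Hdist_eq. apply hnorm_ext; [intros; simpl; ring|].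
  simpl. unfold imherm; simpl. rewrite fsum_eq0 by (intros; ring). ring.
Qed.

Lemma Hdist_0_l n p : Hdist n H0 p = hnorm n p.
Proof. now rewrite Hdist_sym, Hdist_0_r. Qed.

Lemma sphere_nonempty n r c : 0 <= r -> exists s, Hsphere n r c s.
Proof.
  intros Hr. exists (Hmul n (mkH (fun _ => 0) (fun _ => 0) (r ^ 2)) c).
  unfold Hsphere. rewrite Hdist_eq. unfold hnorm.
  transitivity (gauge 0 (r ^ 2)); [f_equal|now apply gauge_vertical].
  - apply fsum_eq0; intros; simpl; ring.
  - simpl. unfold imherm; simpl.
    rewrite !fsum_eq0 by (intros; ring). ring.
Qed.

Lemma shell_near_sphere n t r c y : r > 0 -> Hshell n t r c y ->
  forall d, d > 0 -> exists s, Hdist n s c = r /\ Hdist n y s < t + d.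
Proof.
  intros Hr Hy d Hd. unfold Hshell, Hdist_set in Hy.
  set (A := fun a => exists s, Hsphere n r c s /\ a = Hdist n y s) in *.
  destruct (is_glb_exists A) as [m Hm].
  - destruct (sphere_nonempty n r c) as [s Hs]; [lra|]. now exists (Hdist n y s), s.
  - intros x [s [_ ->]]. rewrite Hdist_eq. apply hnorm_spec.
  - rewrite (Rinf_eq A m Hm) in Hy. apply NNPP. intros Hno.
    assert (t + d <= m); [|lra].
    apply (proj2 Hm). intros x [s [Hs ->]]. apply Rnot_lt_le. intros Hlt. now apply Hno; exists s.
Qed.

Lemma sphere_point_dist_bounds n r h c y s :
  Hdist n s c = r -> Hdist n y s <= h -> r - 3 * h <= Hdist n y c <= r + 3 * h.
Proof.
  intros Hs Hy. pose proof (Hdist_quasi_triangle n y s c).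
  pose proof (Hdist_quasi_triangle n s y c). rewrite (Hdist_sym n s y) in *. lra.
Qed.

Lemma Hhat_eq n p : Hhat n p = Hdil (/ hnorm n p) p.
Proof. unfold Hhat. now rewrite Hdist_0_r. Qed.

Lemma hnorm_Hhat n p : Hnonzero n p -> hnorm n (Hhat n p) = 1.
Proof.
  intros Hp. pose proof (hnorm_pos n p Hp).
  rewrite Hhat_eq, hnorm_dil by (now apply Rinv_0_lt_compat). field. lra.
Qed.

Lemma rho_eq n j p : Hnonzero n p ->
  rho n j p = sqrt (hx p j ^ 2 + hy p j ^ 2) / hnorm n p.
Proof.
  intros Hp. pose proof (hnorm_pos n p Hp). unfold rho. rewrite Hhat_eq; cbn [hx hy Hdil].
  replace ((/ hnorm n p * hx p j) ^ 2 + (/ hnorm n p * hy p j) ^ 2)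
    with ((/ hnorm n p) ^ 2 * (hx p j ^ 2 + hy p j ^ 2)) by ring.
  rewrite sqrt_mult, sqrt_pow2 by (try apply pow2_ge_0; try nra;
    left; apply Rinv_0_lt_compat; lra).
  unfold Rdiv. ring.
Qed.

Lemma polar_decomposition x y : exists th, - PI < th <= PI /\
  x = sqrt (x ^ 2 + y ^ 2) * cos th /\ y = sqrt (x ^ 2 + y ^ 2) * sin th.
Proof.
  pose proof PI_RGT_0.
  set (r := sqrt (x ^ 2 + y ^ 2)).
  assert (Hr2 : r ^ 2 = x ^ 2 + y ^ 2) by (apply sqrt_sqr; nra).
  assert (Hr0 : 0 <= r) by apply sqrt_pos.
  destruct (Req_dec r 0) as [R0|R0].
  { exists 0. assert (x = 0 /\ y = 0) as [-> ->] by (rewrite R0 in Hr2; nra).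
    rewrite cos_0, sin_0. lra. }
  set (c := x / r).
  assert (Hc2 : c ^ 2 = x ^ 2 / (x ^ 2 + y ^ 2)) by (unfold c; rewrite <- Hr2; field; lra).
  assert (Hcb : -1 <= c <= 1).
  { assert (c ^ 2 <= 1); [|nra]. rewrite Hc2.
    apply Rmult_le_reg_r with (x ^ 2 + y ^ 2); [nra|]. field_simplify; nra. }
  assert (Hcos : cos (acos c) = c) by now apply cos_acos.
  assert (Hsin : sin (acos c) = Rabs y / r).
  { rewrite sin_acos by auto. apply Rsqr_inj.
    - apply sqrt_pos.
    - apply Rmult_le_pos; [apply Rabs_pos|left; apply Rinv_0_lt_compat; lra].
    - rewrite Rsqr_sqrt by (unfold Rsqr; nra). unfold Rsqr.
      replace (Rabs y / r * (Rabs y / r)) with (Rabs y ^ 2 / r ^ 2) by (field; lra).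
      replace (c * c) with (c ^ 2) by ring. rewrite pow2_abs, Hc2, Hr2. field. nra. }
  pose proof (acos_bound c).
  destruct (Rle_dec 0 y) as [Hy|Hy].
  - exists (acos c). split; [lra|]. rewrite Hcos, Hsin, Rabs_right by lra.
    unfold c. split; field; lra.
  - assert (Hc1 : -1 < c < 1).
    { assert (c ^ 2 < 1); [|nra]. rewrite Hc2.
      apply Rmult_lt_reg_r with (x ^ 2 + y ^ 2); [nra|]. field_simplify; nra. }
    pose proof (acos_bound_lt c Hc1).
    exists (- acos c). split; [lra|].
    rewrite cos_neg, sin_neg, Hcos, Hsin, Rabs_left by lra. unfold c. split; field; lra.
Qed.

Lemma phi_spec n j p :
  hx (Hhat n p) j = rho n j p * cos (phi n j p) /\ hy (Hhat n p) j = rho n j p * sin (phi n j p).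
Proof.
  unfold phi. apply (epsilon_spec (inhabits 0) (fun th => - PI < th <= PI /\
     hx (Hhat n p) j = rho n j p * cos th /\ hy (Hhat n p) j = rho n j p * sin th)).
  apply polar_decomposition.
Qed.

Lemma planar_Cauchy_Schwarz a b c d :
  Rabs (a * c + b * d) <= sqrt (a ^ 2 + b ^ 2) * sqrt (c ^ 2 + d ^ 2).
Proof.
  apply Rabs_le_of_sqr; [apply Rmult_le_pos; apply sqrt_pos|].
  rewrite Rpow_mult_distr, !sqrt_sqr by nra. pose proof (pow2_ge_0 (a * d - b * c)). nra.
Qed.

Lemma planar_triangle a b c d :
  (a + c) ^ 2 + (b + d) ^ 2 <= (sqrt (a ^ 2 + b ^ 2) + sqrt (c ^ 2 + d ^ 2)) ^ 2.
Proof.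
  pose proof (planar_Cauchy_Schwarz a b c d). pose proof (Rle_abs (a * c + b * d)).
  pose proof (sqrt_sqr (a ^ 2 + b ^ 2) ltac:(nra)).
  pose proof (sqrt_sqr (c ^ 2 + d ^ 2) ltac:(nra)). nra.
Qed.

Lemma aligned_of_small_angle zx zy wx wy k1 k2 th1 th2 : 0 <= k1 -> 0 <= k2 ->
  zx = k1 * cos th1 -> zy = k1 * sin th1 -> wx = k2 * cos th2 -> wy = k2 * sin th2 ->
  acos (cos (th1 - th2)) < PI / 6 ->
  0 <= zx * wx + zy * wy /\ 3 * (wx * zy - wy * zx) ^ 2 <= (zx * wx + zy * wy) ^ 2.
Proof.
  intros Hk1 Hk2 -> -> -> -> Hangle. set (d := th1 - th2) in *.
  replace (k1 * cos th1 * (k2 * cos th2) + k1 * sin th1 * (k2 * sin th2))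
    with (k1 * k2 * cos d) by (unfold d; rewrite cos_minus; ring).
  replace (k2 * cos th2 * (k1 * sin th1) - k2 * sin th2 * (k1 * cos th1))
    with (k1 * k2 * sin d) by (unfold d; rewrite sin_minus; ring).
  pose proof PI_RGT_0.
  assert (Hcos : sqrt 3 / 2 < cos d).
  { pose proof (acos_bound (cos d)). rewrite <- cos_PI6.
    rewrite <- (cos_acos (cos d)) by (split; apply COS_bound).
    apply cos_decreasing_1; lra. }
  assert (H3 : sqrt 3 * sqrt 3 = 3) by (apply sqrt_sqrt; lra).
  assert (0 < sqrt 3) by (apply sqrt_lt_R0; lra).
  pose proof (sin2_cos2 d) as Hsc. rewrite !Rsqr_pow2 in Hsc.
  assert (Hcos2 : 3 / 4 < cos d ^ 2) by nra.
  assert (0 <= k1 * k2) by nra. set (K := k1 * k2) in *.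
  split; [nra|].
  rewrite !Rpow_mult_distr. replace (sin d ^ 2) with (1 - cos d ^ 2) by lra.
  assert (0 <= K ^ 2 * (cos d ^ 2 - 3 / 4)) by (apply Rmult_le_pos; [apply pow2_ge_0|lra]).
  lra.
Qed.

(* The coordinate terms of the sphere identity have the shape
   [al (z.v) - c (v x z)] with [v x z = vx zy - vy zx]. *)
Lemma cross_form_lb zx zy vx vy al be c K V : 0 <= al -> Rabs c <= be ->
  sqrt (zx ^ 2 + zy ^ 2) <= K -> sqrt (vx ^ 2 + vy ^ 2) <= V ->
  - ((al + be) * K * V) <= al * (zx * vx + zy * vy) - c * (vx * zy - vy * zx).
Proof.
  intros Hal Hc HK HV.
  pose proof (planar_Cauchy_Schwarz zx zy vx vy) as C1.
  pose proof (planar_Cauchy_Schwarz zx zy vy (- vx)) as C2.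
  replace (zx * vy + zy * - vx) with (- (vx * zy - vy * zx)) in C2 by ring.
  replace (vy ^ 2 + (- vx) ^ 2) with (vx ^ 2 + vy ^ 2) in C2 by ring. rewrite Rabs_Ropp in C2.
  set (Z := sqrt (zx ^ 2 + zy ^ 2)) in *. set (W := sqrt (vx ^ 2 + vy ^ 2)) in *.
  assert (0 <= Z) by apply sqrt_pos. assert (0 <= W) by apply sqrt_pos.
  assert (ZW : Z * W <= K * V) by (apply Rmult_le_compat; lra).
  pose proof (Rle_abs (- (zx * vx + zy * vy))) as A1. rewrite Rabs_Ropp in A1.
  pose proof (Rle_abs (c * (vx * zy - vy * zx))) as A2. rewrite Rabs_mult in A2.
  pose proof (Rabs_pos c).
  assert (al * Rabs (zx * vx + zy * vy) <= al * (Z * W)) by (apply Rmult_le_compat_l; lra).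
  assert (Rabs c * Rabs (vx * zy - vy * zx) <= be * (Z * W))
    by (apply Rmult_le_compat; try apply Rabs_pos; lra).
  nra.
Qed.

Lemma cross_form_nonneg_of_aligned zx zy wx wy ex ey al c E :
  0 < al -> Rabs c <= 51 / 100 * al -> 0 <= E -> ex ^ 2 + ey ^ 2 <= E ^ 2 ->
  0 <= zx * wx + zy * wy -> 3 * (wx * zy - wy * zx) ^ 2 <= (zx * wx + zy * wy) ^ 2 ->
  (26 / 10 * E) ^ 2 <= wx ^ 2 + wy ^ 2 ->
  0 <= al * (zx * (wx - ex) + zy * (wy - ey)) - c * ((wx - ex) * zy - (wy - ey) * zx).
Proof.
  intros Hal Hc HE Hex HP HPQ HW.
  set (P := zx * wx + zy * wy) in *. set (Q := wx * zy - wy * zx) in *.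
  set (Z := sqrt (zx ^ 2 + zy ^ 2)). set (W := sqrt (wx ^ 2 + wy ^ 2)).
  assert (Z0 : 0 <= Z) by apply sqrt_pos. assert (W0 : 0 <= W) by apply sqrt_pos.
  assert (Z2 : Z ^ 2 = zx ^ 2 + zy ^ 2) by (apply sqrt_sqr; nra).
  assert (W2 : W ^ 2 = wx ^ 2 + wy ^ 2) by (apply sqrt_sqr; nra).
  assert (HWE : 26 / 10 * E <= W) by (apply Rsqr_incr_0_var; [rewrite !Rsqr_pow2; lra|lra]).
  assert (HPQZ : P ^ 2 + Q ^ 2 = Z ^ 2 * W ^ 2) by (unfold P, Q; rewrite Z2, W2; ring).
  assert (HP2 : 17 / 10 * (Z * W) <= 2 * P).
  { apply Rsqr_incr_0_var; [|lra]. unfold Rsqr. assert (0 <= Z * W) by nra. nra. }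
  assert (HQ2 : 2 * Rabs Q <= Z * W).
  { apply Rsqr_incr_0_var; [|nra]. unfold Rsqr. pose proof (pow2_abs Q). nra. }
  pose proof (planar_Cauchy_Schwarz zx zy ex ey) as C1.
  pose proof (planar_Cauchy_Schwarz zx zy ey (- ex)) as C2.
  replace (zx * ey + zy * - ex) with (- (ex * zy - ey * zx)) in C2 by ring.
  replace (ey ^ 2 + (- ex) ^ 2) with (ex ^ 2 + ey ^ 2) in C2 by ring. rewrite Rabs_Ropp in C2.
  fold Z in C1, C2.
  assert (FE : sqrt (ex ^ 2 + ey ^ 2) <= E) by (apply sqrt_le_of_sqr; lra).
  pose proof (sqrt_pos (ex ^ 2 + ey ^ 2)).
  assert (ZF : Z * sqrt (ex ^ 2 + ey ^ 2) <= Z * E) by (apply Rmult_le_compat_l; lra).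
  replace (zx * (wx - ex) + zy * (wy - ey)) with (P - (zx * ex + zy * ey)) by (unfold P; ring).
  replace ((wx - ex) * zy - (wy - ey) * zx) with (Q - (ex * zy - ey * zx)) by (unfold Q; ring).
  set (D := zx * ex + zy * ey) in *. set (J := ex * zy - ey * zx) in *.
  pose proof (Rle_abs D). pose proof (Rle_abs (c * (Q - J))) as A1.
  rewrite Rabs_mult in A1. pose proof (Rabs_triang Q (- J)) as A2. rewrite Rabs_Ropp in A2.
  pose proof (Rabs_pos c). pose proof (Rabs_pos Q).
  assert (T1 : Rabs c * Rabs (Q - J) <= 51 / 100 * al * (Rabs Q + Z * E))
    by (apply Rmult_le_compat; try apply Rabs_pos; unfold Rminus; lra).
  assert (T2 : al * (Z * E) <= al * (Z * W) * (10 / 26)).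
  { assert (Z * (26 / 10 * E) <= Z * W) by (apply Rmult_le_compat_l; lra). nra. }
  assert (T3 : al * Rabs Q <= al * (Z * W) / 2).
  { assert (al * (2 * Rabs Q) <= al * (Z * W)) by (apply Rmult_le_compat_l; lra). lra. }
  assert (T4 : al * (Z * W) * (17 / 20) <= al * P).
  { assert (al * (17 / 10 * (Z * W)) <= al * (2 * P)) by (apply Rmult_le_compat_l; lra). lra. }
  assert (T5 : al * D <= al * (Z * E)) by (apply Rmult_le_compat_l; lra).
  nra.
Qed.

Lemma Hhat_coords n p : Hnonzero n p ->
  (forall j, hx p j = hnorm n p * hx (Hhat n p) j /\ hy p j = hnorm n p * hy (Hhat n p) j) /\
  ht p = hnorm n p ^ 2 * ht (Hhat n p).
Proof.
  intros Hp. pose proof (hnorm_pos n p Hp). rewrite Hhat_eq; cbn [hx hy ht Hdil].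
  split; [intros j; split|]; field; lra.
Qed.

Lemma near_vertical n u w e : hnorm n u = 1 -> Rabs e = 1 -> 99 / 100 <= e * ht u ->
  Hdist n u w <= 1 / 10 -> znorm n w <= 2411 / 10000 /\ 96 / 100 <= e * ht w.
Proof.
  intros Hu He Heu Huw. rewrite Hdist_eq in Huw. set (x := Hmul n u (Hinv w)) in *.
  destruct (hnorm_spec n u) as (_ & Hu4 & _). rewrite Hu, !pow1, Rmult_1_r in Hu4.
  destruct (hnorm_spec n x) as (Hx0 & _ & Hxz & Hxt).
  assert (Hhtu : 99 / 100 <= Rabs (ht u)).
  { pose proof (Rle_abs (e * ht u)). rewrite Rabs_mult, He in *. lra. }
  assert (Hzu : znorm n u <= 1411 / 10000).
  { apply znorm_le; [lra|]. rewrite <- pow2_abs in Hu4.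
    assert ((99 / 100) ^ 2 <= Rabs (ht u) ^ 2) by (apply pow_incr; lra). lra. }
  assert (Hzw : znorm n w <= znorm n u + znorm n x)
    by (apply znorm_sub_le; intros; unfold x; simpl; split; ring).
  pose proof (znorm_nonneg n u). pose proof (znorm_nonneg n w).
  assert (Him : Rabs (imherm n u w) <= 35 / 1000).
  { pose proof (imherm_abs_le n u w).
    assert (znorm n u * znorm n w <= 1411 / 10000 * (2411 / 10000))
      by (apply Rmult_le_compat; lra). lra. }
  assert (Hht : ht u - ht w = ht x + / 2 * imherm n u w)
    by (unfold x; simpl; rewrite imherm_inv_r; ring).
  assert (Hdiff : Rabs (e * (ht u - ht w)) <= 3 / 100).
  { rewrite Rabs_mult, He, Hht, Rmult_1_l.
    pose proof (Rabs_triang (ht x) (/ 2 * imherm n u w)).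
    rewrite Rabs_mult, (Rabs_right (/ 2)) in * by lra.
    assert (hnorm n x ^ 2 <= 1 / 100) by nra. lra. }
  pose proof (Rle_abs (e * (ht u - ht w))). split; lra.
Qed.

(** * The configuration of the lemma is contradictory *)

Section Configuration.

Variables (n : nat) (p q s s0 : Hpt) (t tt T R0 eps r rt : R).

Hypotheses (Hp : Hnonzero n p) (Hq : Hnonzero n q).
Hypotheses (Ht : t >= 1) (Htt : tt >= 1) (HT : T >= t * tt) (HR0 : R0 > 1000 * INR n + 1000)
  (Hrt : rt >= T * R0) (Hrt_eps : rt <= eps * r) (Heps : 0 < eps < 1 / 1000).
Hypotheses (Ha : r - 33 / 10 * t <= hnorm n p <= r + 33 / 10 * t)
  (Hb : rt - 33 / 10 * tt <= hnorm n q <= rt + 33 / 10 * tt).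
Hypotheses (Hs : Hdist n s p = r) (Hs0 : Hdist n s0 p = r)
  (Hqs : Hdist n q s <= 11 / 10 * t) (Hs0_small : hnorm n s0 <= 11 / 10 * t).
Hypotheses (Htau : Rabs (ht (Hhat n p)) >= 99 / 100)
  (Hphi : forall i, (i < n)%nat -> phi2 n i p q < PI / 6)
  (Hrho : forall i, (i < n)%nat -> 10 * T / r <= rho n i p -> 10 * T / rt <= rho n i q)
  (Hclose : Hdist n (Hhat n p) (Hhat n q) <= 1 / 10).

Local Notation a := (hnorm n p).
Local Notation b := (hnorm n q).
Local Notation h := (11 / 10 * t).

Lemma T_ge : t <= T /\ tt <= T.
Proof. split; nra. Qed.

Lemma rt_ge : 1000 * T <= rt.
Proof.
  pose proof (pos_INR n). pose proof T_ge.
  assert (T * 1000 <= T * R0) by (apply Rmult_le_compat_l; lra). lra.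
Qed.

Lemma r_ge : 0 < r /\ 1000 * rt <= r.
Proof.
  pose proof rt_ge. pose proof T_ge.
  assert (0 < r) by (destruct (Rle_dec r 0); [nra|lra]).
  split; nra.
Qed.

Lemma a_approx : 999 / 1000 * r <= a <= 1001 / 1000 * r.
Proof. pose proof rt_ge. pose proof r_ge. pose proof T_ge. lra. Qed.

Lemma b_approx : 99 / 100 * rt <= b <= 101 / 100 * rt.
Proof. pose proof rt_ge. pose proof T_ge. lra. Qed.

Lemma h_small : 0 < h <= 12 / 10000 * b.
Proof. pose proof rt_ge. pose proof T_ge. pose proof b_approx. lra. Qed.

Lemma b_small : b <= 102 / 100000 * a.
Proof. pose proof b_approx. pose proof a_approx. pose proof r_ge. lra. Qed.

Lemma nT_small : INR n * T <= 102 / 100000 * b.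
Proof.
  pose proof (pos_INR n). pose proof T_ge. pose proof b_approx.
  assert (T * (1000 * INR n + 1000) <= T * R0) by (apply Rmult_le_compat_l; lra). lra.
Qed.

Local Notation e := (if Rle_dec 0 (ht (Hhat n p)) then 1 else -1).

Lemma Rabs_e : Rabs e = 1.
Proof. destruct Rle_dec; [apply Rabs_R1|rewrite Rabs_left; lra]. Qed.

Lemma e_ht_hat_p : 99 / 100 <= e * ht (Hhat n p).
Proof.
  destruct Rle_dec; [rewrite Rabs_right in Htau|rewrite Rabs_left in Htau]; lra.
Qed.

Lemma e_ht_p : 99 / 100 * a ^ 2 <= e * ht p <= a ^ 2.
Proof.
  destruct (hnorm_spec n p) as (_ & _ & _ & Hhtp). pose proof (Rle_abs (e * ht p)) as Hle. rewrite Rabs_mult, Rabs_e, Rmult_1_l in Hle.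
  destruct (Hhat_coords n p Hp) as [_ Hht]. pose proof e_ht_hat_p.
  assert (0 <= a ^ 2 * (e * ht (Hhat n p) - 99 / 100))
    by (apply Rmult_le_pos; [apply pow2_ge_0|lra]).
  rewrite Hht in *. lra.
Qed.

Lemma q_hat_near_vertical :
  znorm n (Hhat n q) <= 2411 / 10000 /\ 96 / 100 <= e * ht (Hhat n q).
Proof. apply (near_vertical n (Hhat n p)); auto using hnorm_Hhat, Rabs_e, e_ht_hat_p. Qed.

Lemma e_ht_q : 96 / 100 * b ^ 2 <= e * ht q.
Proof.
  destruct (Hhat_coords n q Hq) as [_ ->]. destruct q_hat_near_vertical as [_ Hv].
  assert (0 <= b ^ 2 * (e * ht (Hhat n q) - 96 / 100))
    by (apply Rmult_le_pos; [apply pow2_ge_0|lra]). lra.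
Qed.

Lemma znorm_q : znorm n q <= b / 4.
Proof.
  pose proof (hnorm_pos n q Hq) as Hb0. destruct q_hat_near_vertical as [Hz _].
  pose proof (znorm_nonneg n (Hhat n q)).
  apply znorm_le; [lra|].
  replace (znorm2 n q) with (b ^ 2 * znorm n (Hhat n q) ^ 2).
  - assert (znorm n (Hhat n q) ^ 2 <= (2411 / 10000) ^ 2) by (apply pow_incr; lra).
    pose proof (pow2_ge_0 b). nra.
  - rewrite znorm_sqr, Hhat_eq, znorm2_dil. field. lra.
Qed.

Lemma e_mul_abs y : - Rabs y <= e * y <= Rabs y.
Proof.
  pose proof (Rle_abs (e * y)). pose proof (Rle_abs (- (e * y))).
  rewrite Rabs_Ropp, Rabs_mult, Rabs_e in *. lra.
Qed.

Local Notation nq := (znorm n q).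
Local Notation g := (Hmul n q (Hinv s)).
Local Notation v := (Hmul n s (Hinv s0)).

Lemma hnorm_g : hnorm n g <= h.
Proof. rewrite <- Hdist_eq. exact Hqs. Qed.

Lemma znorm_s : znorm n s <= nq + h.
Proof.
  assert (znorm n s <= znorm n q + znorm n g)
    by (apply znorm_sub_le; intros; simpl; split; ring).
  destruct (hnorm_spec n g) as (_ & _ & Hgz & _). pose proof hnorm_g. lra.
Qed.

Lemma znorm_v : znorm n v <= nq + 2 * h.
Proof.
  assert (znorm n v <= znorm n s + znorm n s0)
    by (apply znorm_sub_le; intros; simpl; split; ring).
  destruct (hnorm_spec n s0) as (_ & _ & Hz & _). pose proof znorm_s. lra.
Qed.

Lemma ht_g_s0_small : Rabs (ht g) <= h ^ 2 /\ Rabs (ht s0) <= h ^ 2.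
Proof.
  destruct (hnorm_spec n g) as (Hg0 & _ & _ & Hgt).
  destruct (hnorm_spec n s0) as (Hs00 & _ & _ & Hs0t).
  pose proof hnorm_g. pose proof h_small.
  split; [assert (hnorm n g ^ 2 <= h ^ 2) | assert (hnorm n s0 ^ 2 <= h ^ 2)];
    try (apply pow_incr; lra); lra.
Qed.

Lemma imherm_q_s : Rabs (imherm n q s) <= nq * (nq + h).
Proof.
  pose proof (imherm_abs_le n q s). pose proof znorm_s. pose proof (znorm_nonneg n q).
  assert (znorm n q * znorm n s <= znorm n q * (znorm n q + h))
    by (apply Rmult_le_compat_l; lra).
  lra.
Qed.

Lemma ht_s_bounds : Rabs (ht s) <= b ^ 2 + h ^ 2 + / 2 * (nq * (nq + h)) /\
  96 / 100 * b ^ 2 - h ^ 2 - / 2 * (nq * (nq + h)) <= e * ht s.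
Proof.
  assert (Hhts : ht s = ht q - ht g - / 2 * imherm n q s)
    by (simpl; rewrite imherm_inv_r; ring).
  destruct (hnorm_spec n q) as (_ & _ & _ & Hqt). pose proof ht_g_s0_small as [Hg _]. pose proof imherm_q_s. pose proof e_ht_q.
  pose proof (e_mul_abs (ht g)). pose proof (e_mul_abs (imherm n q s)).
  rewrite Hhts. split.
  - pose proof (Rabs_triang (ht q + - ht g) (- (/ 2 * imherm n q s))) as T1.
    pose proof (Rabs_triang (ht q) (- ht g)) as T2.
    rewrite Rabs_Ropp in T1, T2. rewrite Rabs_mult, (Rabs_right (/ 2)) in T1 by lra.
    unfold Rminus. lra.
  - lra.
Qed.

Lemma small_quantities :
  nq * (nq + h) <= 63 / 1000 * b ^ 2 /\ h ^ 2 <= b ^ 2 / 100000 /\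
  b ^ 2 <= a ^ 2 / 100000 /\ b * a <= a ^ 2 / 500 /\ nq + 2 * h <= 26 / 100 * b.
Proof.
  pose proof znorm_q. pose proof (znorm_nonneg n q). pose proof h_small. pose proof b_small.
  pose proof a_approx. pose proof r_ge. pose proof (pow2_ge_0 a). pose proof (pow2_ge_0 b).
  assert (0 < a) by lra.
  repeat split; [| | | |lra].
  - assert (nq * (nq + h) <= b / 4 * (b / 4 + 12 / 10000 * b)) by (apply Rmult_le_compat; lra).
    lra.
  - assert (h * h <= 12 / 10000 * b * (12 / 10000 * b)) by (apply Rmult_le_compat; lra). lra.
  - assert (b * b <= 102 / 100000 * a * (102 / 100000 * a)) by (apply Rmult_le_compat; lra).
    lra.
  - assert (b * a <= 102 / 100000 * a * a) by (apply Rmult_le_compat_r; lra). lra.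
Qed.

Local Notation Is := (imherm n s p).
Local Notation Is0 := (imherm n s0 p).

Lemma imherm_p_bound : Rabs Is + Rabs Is0 <= (nq + 2 * h) * a.
Proof.
  pose proof (imherm_abs_le n s p). pose proof (imherm_abs_le n s0 p).
  destruct (hnorm_spec n p) as (_ & _ & Hpz & _). destruct (hnorm_spec n s0) as (_ & _ & Hz & _).
  pose proof znorm_s. pose proof (znorm_nonneg n s). pose proof (znorm_nonneg n s0).
  pose proof (znorm_nonneg n p).
  assert (znorm n s * znorm n p <= (nq + h) * a) by (apply Rmult_le_compat; lra).
  assert (znorm n s0 * znorm n p <= h * a) by (apply Rmult_le_compat; lra).
  lra.
Qed.

Local Notation X := (e * (2 * ht p - ht s - ht s0 + / 2 * (Is + Is0))).
Local Notation L := (e * (ht s - ht s0)).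

Lemma X_bounds : 19 / 10 * a ^ 2 <= X <= 204 / 100 * r ^ 2.
Proof.
  pose proof e_ht_p. pose proof ht_s_bounds as [Hhs _]. pose proof ht_g_s0_small as [_ Hs0t].
  pose proof imherm_p_bound. pose proof small_quantities as (Q1 & Q2 & Q3 & Q4 & Q5).
  pose proof (e_mul_abs (ht s)). pose proof (e_mul_abs (ht s0)).
  pose proof (e_mul_abs Is). pose proof (e_mul_abs Is0).
  pose proof a_approx. pose proof r_ge.
  assert ((nq + 2 * h) * a <= 26 / 100 * b * a) by (apply Rmult_le_compat_r; lra).
  assert (a * a <= 1001 / 1000 * r * (1001 / 1000 * r)) by (apply Rmult_le_compat; lra).
  split; lra.
Qed.

Lemma L_ge : 9 / 10 * b ^ 2 <= L.
Proof.
  pose proof ht_s_bounds as [_ Hhs]. pose proof ht_g_s0_small as [_ Hs0t].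
  pose proof small_quantities as (Q1 & Q2 & _). pose proof (e_mul_abs (ht s0)). lra.
Qed.

Local Notation cross j := (2 * r ^ 2 * (hx p j * hx v j + hy p j * hy v j)
  - X / 2 * e * (hx v j * hy p j - hy v j * hx p j)).

(* Subtracting the equations [N^4 = |z|^2 N^2 + t^2] of [s p^-1] and [s0 p^-1], both of
   norm [r], and factoring the difference of the squared heights. *)
Lemma sphere_identity : X * L + fsum (fun j => cross j) n = r ^ 2 * (znorm2 n s - znorm2 n s0).
Proof.
  destruct (hnorm_spec n (Hmul n s (Hinv p))) as (_ & E1 & _).
  destruct (hnorm_spec n (Hmul n s0 (Hinv p))) as (_ & E2 & _).
  rewrite <- Hdist_eq, Hs, znorm2_mul_inv in E1. rewrite <- Hdist_eq, Hs0, znorm2_mul_inv in E2.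
  replace (ht (Hmul n s (Hinv p))) with (ht s - ht p - / 2 * Is) in E1
    by (simpl; rewrite imherm_inv_r; ring).
  replace (ht (Hmul n s0 (Hinv p))) with (ht s0 - ht p - / 2 * Is0) in E2
    by (simpl; rewrite imherm_inv_r; ring).
  assert (Hsum : fsum (fun j => cross j) n
                 = 2 * r ^ 2 * (zdot n s p - zdot n s0 p) - X / 2 * e * (Is - Is0)).
  { assert (Hdot : zdot n s p - zdot n s0 p
                   = fsum (fun j => hx p j * hx v j + hy p j * hy v j) n)
      by (unfold zdot; rewrite <- fsum_minus; apply fsum_ext; intros; simpl; ring).
    assert (Him : Is - Is0 = fsum (fun j => hx v j * hy p j - hy v j * hx p j) n)
      by (unfold imherm; rewrite <- fsum_minus; apply fsum_ext; intros; simpl; ring).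
    rewrite Hdot, Him, <- !fsum_scal, <- fsum_minus. apply fsum_ext; intros; ring. }
  assert (He : e * e = 1) by (destruct (Rle_dec 0 (ht (Hhat n p))); ring).
  assert (Hheights : X * L - X / 2 * e * (Is - Is0)
            = (e * e) * ((ht s0 - ht p - / 2 * Is0) ^ 2 - (ht s - ht p - / 2 * Is) ^ 2))
    by field.
  rewrite He in Hheights. rewrite Hsum. lra.
Qed.

Local Notation K := ((2 * r ^ 2 + X / 2) * (10 * T * a / r) * (nq + 2 * h)).

Lemma Rabs_X_e : Rabs (X / 2 * e) = X / 2.
Proof.
  rewrite Rabs_mult, Rabs_e, Rabs_right; [ring|]. pose proof X_bounds. pose proof (pow2_ge_0 a).
  lra.
Qed.

Lemma cross_small j : (j < n)%nat -> rho n j p < 10 * T / r -> - K <= cross j.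
Proof.
  intros Hj Hsmall. pose proof (hnorm_pos n p Hp). pose proof r_ge.
  apply cross_form_lb; [pose proof (pow2_ge_0 r); lra|rewrite Rabs_X_e; lra| |].
  - rewrite (rho_eq n j p Hp) in Hsmall. apply Rlt_le.
    apply (Rmult_lt_compat_r a) in Hsmall; [|lra].
    replace (sqrt (hx p j ^ 2 + hy p j ^ 2) / a * a) with (sqrt (hx p j ^ 2 + hy p j ^ 2))
      in Hsmall by (field; lra).
    replace (10 * T * a / r) with (10 * T / r * a) by (field; lra). lra.
  - pose proof (coord_le_znorm n v j Hj). pose proof znorm_v. lra.
Qed.

Lemma coord_q_large j : (j < n)%nat -> 10 * T / r <= rho n j p ->
  (26 / 10 * (2 * h)) ^ 2 <= hx q j ^ 2 + hy q j ^ 2.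
Proof.
  intros Hj Hbig. pose proof (Hrho j Hj Hbig) as Hq_big.
  pose proof (hnorm_pos n q Hq). pose proof b_approx. pose proof rt_ge. pose proof T_ge.
  rewrite (rho_eq n j q Hq) in Hq_big.
  assert (Hcoord : b * (10 * T / rt) <= sqrt (hx q j ^ 2 + hy q j ^ 2)).
  { apply (Rmult_le_compat_l b) in Hq_big; [|lra].
    replace (b * (sqrt (hx q j ^ 2 + hy q j ^ 2) / b)) with (sqrt (hx q j ^ 2 + hy q j ^ 2))
      in Hq_big by (field; lra).
    exact Hq_big. }
  assert (99 / 100 * (10 * T) <= b * (10 * T / rt)).
  { unfold Rdiv. replace (b * (10 * T * / rt)) with (b / rt * (10 * T)) by (field; lra).
    apply Rmult_le_compat_r; [lra|].
    apply Rmult_le_reg_r with rt; [lra|]. replace (b / rt * rt) with b by (field; lra). lra. }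
  rewrite <- (sqrt_sqr (hx q j ^ 2 + hy q j ^ 2)) by nra.
  apply pow_incr. lra.
Qed.

Lemma cross_aligned j : (j < n)%nat -> 10 * T / r <= rho n j p -> 0 <= cross j.
Proof.
  intros Hj Hbig. pose proof (hnorm_pos n p Hp). pose proof (hnorm_pos n q Hq). pose proof r_ge.
  assert (Haligned : 0 <= hx p j * hx q j + hy p j * hy q j /\
          3 * (hx q j * hy p j - hy q j * hx p j) ^ 2 <= (hx p j * hx q j + hy p j * hy q j) ^ 2).
  { destruct (Hhat_coords n p Hp) as [Hpc _]. destruct (Hhat_coords n q Hq) as [Hqc _].
    destruct (Hpc j) as [Hpx Hpy]. destruct (Hqc j) as [Hqx Hqy].
    destruct (phi_spec n j p) as [Hpx' Hpy']. destruct (phi_spec n j q) as [Hqx' Hqy'].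
    apply (aligned_of_small_angle _ _ _ _ (a * rho n j p) (b * rho n j q)
             (phi n j p) (phi n j q)).
    - unfold rho. pose proof (sqrt_pos (hx (Hhat n p) j ^ 2 + hy (Hhat n p) j ^ 2)). nra.
    - unfold rho. pose proof (sqrt_pos (hx (Hhat n q) j ^ 2 + hy (Hhat n q) j ^ 2)). nra.
    - rewrite Hpx, Hpx'. ring.
    - rewrite Hpy, Hpy'. ring.
    - rewrite Hqx, Hqx'. ring.
    - rewrite Hqy, Hqy'. ring.
    - exact (Hphi j Hj). }
  assert (Herr : (hx q j - hx v j) ^ 2 + (hy q j - hy v j) ^ 2 <= (2 * h) ^ 2).
  { pose proof (planar_triangle (hx g j) (hy g j) (hx s0 j) (hy s0 j)) as M.
    pose proof (coord_le_znorm n g j Hj). pose proof (coord_le_znorm n s0 j Hj).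
    destruct (hnorm_spec n g) as (_ & _ & Hgz & _). destruct (hnorm_spec n s0) as (_ & _ & Hz & _).
    pose proof hnorm_g. pose proof (sqrt_pos (hx g j ^ 2 + hy g j ^ 2)).
    pose proof (sqrt_pos (hx s0 j ^ 2 + hy s0 j ^ 2)).
    assert ((sqrt (hx g j ^ 2 + hy g j ^ 2) + sqrt (hx s0 j ^ 2 + hy s0 j ^ 2)) ^ 2 <= (2 * h) ^ 2)
      by (apply pow_incr; lra).
    replace (hx q j - hx v j) with (hx g j + hx s0 j) by (simpl; ring).
    replace (hy q j - hy v j) with (hy g j + hy s0 j) by (simpl; ring). lra. }
  replace (cross j) with (2 * r ^ 2 * (hx p j * (hx q j - (hx q j - hx v j))
      + hy p j * (hy q j - (hy q j - hy v j))) - X / 2 * e * ((hx q j - (hx q j - hx v j)) * hy p j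
      - (hy q j - (hy q j - hy v j)) * hx p j)) by ring.
  apply cross_form_nonneg_of_aligned with (E := 2 * h); try tauto.
  - pose proof (pow_lt r 2 ltac:(lra)). lra.
  - rewrite Rabs_X_e. pose proof X_bounds. lra.
  - pose proof h_small. lra.
  - now apply coord_q_large.
Qed.

Lemma cross_sum_ge : - (INR n * K) <= fsum (fun j => cross j) n.
Proof.
  replace (- (INR n * K)) with (INR n * (- K)) by ring.
  apply fsum_ge_const. intros j Hj.
  destruct (Rlt_dec (rho n j p) (10 * T / r)) as [Hsmall|Hbig].
  - now apply cross_small.
  - pose proof (cross_aligned j Hj ltac:(lra)).
    assert (0 <= K); [|lra].
    pose proof X_bounds. pose proof (pow2_ge_0 a). pose proof (pow2_ge_0 r). pose proof r_ge.
    pose proof (hnorm_pos n p Hp). pose proof T_ge. pose proof (znorm_nonneg n q).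
    pose proof h_small.
    repeat apply Rmult_le_pos; try lra. left. now apply Rinv_0_lt_compat.
Qed.

Lemma K_bound : INR n * K <= 1 / 100 * (a ^ 2 * b ^ 2).
Proof.
  pose proof X_bounds. pose proof a_approx. pose proof r_ge. pose proof T_ge. pose proof nT_small.
  pose proof small_quantities as (_ & _ & _ & _ & Q5). pose proof h_small.
  pose proof (znorm_nonneg n q). pose proof (pos_INR n). pose proof (pow2_ge_0 a).
  assert (F1 : 2 * r ^ 2 + X / 2 <= 303 / 100 * a ^ 2).
  { assert (r * r <= a / (999 / 1000) * (a / (999 / 1000)))
      by (apply Rmult_le_compat; try lra; apply Rmult_le_reg_r with (999 / 1000); try lra;
          replace (a / (999 / 1000) * (999 / 1000)) with a by field; lra).
    lra. }
  assert (F2 : 10 * T * a / r <= 1001 / 100 * T).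
  { apply Rmult_le_reg_r with r; [lra|]. replace (10 * T * a / r * r) with (10 * T * a) by (field; lra).
    assert (T * a <= T * (1001 / 1000 * r)) by (apply Rmult_le_compat_l; lra). lra. }
  assert (F2' : 0 <= 10 * T * a / r)
    by (apply Rmult_le_pos; [apply Rmult_le_pos; lra|left; apply Rinv_0_lt_compat; lra]).
  assert (HK : K <= 303 / 100 * a ^ 2 * (1001 / 100 * T) * (26 / 100 * b)).
  { apply Rmult_le_compat; try lra.
    - apply Rmult_le_pos; lra.
    - apply Rmult_le_compat; lra. }
  assert (INR n * K <= INR n * (303 / 100 * a ^ 2 * (1001 / 100 * T) * (26 / 100 * b)))
    by (apply Rmult_le_compat_l; lra).
  assert (INR n * T * (a ^ 2 * b) <= 102 / 100000 * b * (a ^ 2 * b))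
    by (apply Rmult_le_compat_r; [apply Rmult_le_pos|]; lra).
  assert (0 <= a ^ 2 * b ^ 2) by (apply Rmult_le_pos; apply pow2_ge_0).
  lra.
Qed.

Theorem configuration_absurd : False.
Proof.
  pose proof sphere_identity. pose proof cross_sum_ge. pose proof K_bound.
  pose proof X_bounds. pose proof L_ge. pose proof a_approx. pose proof r_ge.
  pose proof small_quantities as (Q1 & Q2 & _). pose proof (hnorm_pos n q Hq).
  pose proof (pow2_ge_0 a). pose proof (pow2_ge_0 b).
  assert (HXL : 19 / 10 * a ^ 2 * (9 / 10 * b ^ 2) <= X * L)
    by (apply Rmult_le_compat; lra).
  assert (Hs2 : znorm2 n s - znorm2 n s0 <= (nq + h) ^ 2).
  { pose proof znorm_s. pose proof (znorm_nonneg n s). pose proof (znorm2_nonneg n s0).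
    rewrite <- znorm_sqr. assert (znorm n s ^ 2 <= (nq + h) ^ 2) by (apply pow_incr; lra). lra. }
  assert (Hr2 : r ^ 2 <= 10021 / 10000 * a ^ 2).
  { assert (r * r <= a / (999 / 1000) * (a / (999 / 1000)))
      by (apply Rmult_le_compat; try lra; apply Rmult_le_reg_r with (999 / 1000); try lra;
          replace (a / (999 / 1000) * (999 / 1000)) with a by field; lra).
    lra. }
  assert (Hnqh : (nq + h) ^ 2 <= 64 / 1000 * b ^ 2).
  { pose proof znorm_q. pose proof h_small. pose proof (znorm_nonneg n q).
    assert ((nq + h) ^ 2 <= (2512 / 10000 * b) ^ 2) by (apply pow_incr; lra). lra. }
  assert (r ^ 2 * (znorm2 n s - znorm2 n s0) <= r ^ 2 * (64 / 1000 * b ^ 2))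
    by (apply Rmult_le_compat_l; [apply pow2_ge_0|lra]).
  assert (r ^ 2 * (64 / 1000 * b ^ 2) <= 10021 / 10000 * a ^ 2 * (64 / 1000 * b ^ 2))
    by (apply Rmult_le_compat_r; lra).
  assert (0 < a ^ 2 * b ^ 2) by (apply Rmult_lt_0_compat; apply pow_lt; lra).
  lra.
Qed.

End Configuration.

Theorem lemma13 (n : nat) (Hn : (1 <= n)%nat) :
  exists taub rhob Rb phib epsb : R,
    / 2 < taub < 1 /\ rhob > 0 /\ Rb > 0 /\ phib > 0 /\ epsb > 0 /\
    forall (p q : Hpt) (t tt R0 T eps r rt : R),
      Hnonzero n p -> Hnonzero n q ->
      t >= 1 -> tt >= 1 -> R0 > 1 -> T >= t * tt ->
      0 < eps < 1 ->
      r >= rt -> rt >= T * R0 -> rt <= eps * r ->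
      Hshell n t r p q ->
      Hshell n t r p H0 -> Hshell n tt rt q H0 ->
      R0 > Rb -> eps < epsb ->
      Rabs (ht (Hhat n p)) >= taub ->
      (forall i, (i < n)%nat -> phi2 n i p q < phib) ->
      (exists i, (i < n)%nat /\ ~ (rho n i p < 10 * T / r) /\
                 rho n i q < 10 * T / rt)
      \/ Hdist n (Hhat n p) (Hhat n q) > rhob.
Proof.
  (* The argument does not use [Hn]. *)
  pose proof (pos_INR n) as Hn0. pose proof PI_RGT_0 as HPI.
  exists (99 / 100), (1 / 10), (1000 * INR n + 1000), (PI / 6), (1 / 1000).
  split; [split; lra|]. do 4 (split; [lra|]).
  intros p q t tt R0 T eps r rt Hp Hq Ht Htt HR0 HT Heps Hr Hrt Hrt_eps Hpq Hp0 Hq0 HRb Heb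
    Htau Hphi.
  destruct (classic (exists i, (i < n)%nat /\ ~ (rho n i p < 10 * T / r) /\
                               rho n i q < 10 * T / rt)) as [Hex|Hno]; [now left|right].
  apply Rnot_le_gt. intros Hclose.
  assert (Hrt0 : rt > 0).
  { assert (1 * 1 <= t * tt) by (apply Rmult_le_compat; lra). nra. }
  destruct (shell_near_sphere n t r p H0 ltac:(lra) Hp0 (t / 10) ltac:(lra)) as (s0 & Hs0 & Hs0_near).
  destruct (shell_near_sphere n t r p q ltac:(lra) Hpq (t / 10) ltac:(lra)) as (s & Hs & Hqs).
  destruct (shell_near_sphere n tt rt q H0 Hrt0 Hq0 (tt / 10) ltac:(lra)) as (s1 & Hs1 & Hs1_near).
  pose proof (sphere_point_dist_bounds n r (11 / 10 * t) p H0 s0 Hs0 ltac:(lra)) as Ha.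
  pose proof (sphere_point_dist_bounds n rt (11 / 10 * tt) q H0 s1 Hs1 ltac:(lra)) as Hb.
  rewrite Hdist_0_l in Ha, Hb, Hs0_near.
  apply (configuration_absurd n p q s s0 t tt T R0 eps r rt); auto; try lra.
  intros i Hi Hbig. apply Rnot_lt_le. intros Hlt. apply Hno. exists i. repeat split; auto. lra.
Qed.
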